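(* Let $X$ be a $T_0$ space that is $\operatorname{Irr}$-continuous and $k$-bounded sober. Then $\ll_{\operatorname{Irr}}$ has the interpolation property: whenever $z\ll_{\operatorname{Irr}} x$, there exists $y\in X$ with $z\ll_{\operatorname{Irr}} y\ll_{\operatorname{Irr}} x$.
   Context: For a topological space $X$, a nonempty subset $E$ is irreducible if whenever $E\subseteq A_1\cup A_2$ with $A_1,A_2$ closed, $E\subseteq A_1$ or $E\subseteq A_2$. The specialisation order is $x\le y$ iff $x\in\operatorname{cl}(\{y\})$; $\uparrow x=\{z:z\ge x\}$; $\bigvee$ denotes supremum in this order. $\operatorname{Irr}^+(X)$ is the set of irreducible subsets whose supremum exists. $X$ is $k$-bounded sober if every closed set $F\in\operatorname{Irr}^+(X)$ is the closure of a unique singleton. $x\ll_{\operatorname{Irr}} y$ iff for every $E\in\operatorname{Irr}^+(X)$ with $\bigvee E\ge y$, $E\cap\uparrow x\ne\emptyset$; $\twoheaddownarrow_{\operatorname{Irr}} x=\{y:y\ll_{\operatorname{Irr}} x\}$. $X$ is $\operatorname{Irr}$-continuous if for every $x$, $\twoheaddownarrow_{\operatorname{Irr}} x$ is irreducible and $x=\bigvee\twoheaddownarrow_{\operatorname{Irr}} x$. *)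

From HB Require Import structures.
From mathcomp Require Import all_boot all_order.
From mathcomp Require Import all_classical all_reals all_analysis.
Set Implicit Arguments. Unset Strict Implicit. Unset Printing Implicit Defensive.
Local Open Scope classical_set_scope.

Section IrrDefs.
Variable X : topologicalType.

Definition irreducible (E : set X) : Prop :=
  E !=set0 /\
  forall A1 A2 : set X, closed A1 -> closed A2 -> E `<=` A1 `|` A2 ->
    E `<=` A1 \/ E `<=` A2.

Definition spec_le (x y : X) : Prop := closure [set y] x.

Definition upset (x : X) : set X := [set z | spec_le x z].

Definition is_sup (E : set X) (s : X) : Prop :=
  (forall e, E e -> spec_le e s) /\
  (forall u, (forall e, E e -> spec_le e u) -> spec_le s u).

Definition IrrPlus (E : set X) : Prop := irreducible E /\ exists s, is_sup E s.

Definition k_bounded_sober : Prop :=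
  forall F : set X, closed F -> IrrPlus F -> exists! x : X, F = closure [set x].

Definition way_below_Irr (x y : X) : Prop :=
  forall E : set X, IrrPlus E -> forall s, is_sup E s -> spec_le y s ->
    E `&` upset x !=set0.

Definition wayb_Irr (x : X) : set X := [set y | way_below_Irr y x].

Definition Irr_continuous : Prop :=
  forall x : X, irreducible (wayb_Irr x) /\ is_sup (wayb_Irr x) x.

End IrrDefs.

From mathcomp Require Import all_boot all_order.
From mathcomp Require Import all_classical all_reals all_analysis.

(* Interpolation: if z << x, apply the definition of z << x to the set
   E := \bigcup_(y << x) {w | w << y}.  By k-bounded sobriety the closure of
   {w | w << y} is the closure of {y}, which makes E irreducible with supremum
   x (as {y | y << x} is); so z lies below some w << y << x. *)

Set Implicit Arguments.
Unset Strict Implicit.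
Unset Printing Implicit Defensive.
Local Open Scope classical_set_scope.

Section SpecialisationOrder.
Variable X : topologicalType.
Implicit Types (A E : set X) (s u x y : X).

Lemma closure_sub_closed A E : closed A -> E `<=` A -> closure E `<=` A.
Proof. by move=> cA EA; rewrite closureE; exact: smallest_sub. Qed.

Lemma spec_le_refl x : spec_le x x.
Proof. exact: subset_closure. Qed.

Lemma spec_le_closure x y : spec_le x y -> closure [set x] `<=` closure [set y].
Proof.
by move=> xy; apply: closure_sub_closed; [exact: closed_closure | move=> _ ->].
Qed.

Lemma spec_le_trans x y u : spec_le x y -> spec_le y u -> spec_le x u.
Proof. by move=> xy /spec_le_closure; apply. Qed.

Lemma le_way_below_Irr u x y :
  spec_le u x -> way_below_Irr x y -> way_below_Irr u y.
Proof.
move=> ux xy E EP s Es ys; have [e [Ee xe]] := xy E EP s Es ys.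
by exists e; split => //; exact: spec_le_trans xe.
Qed.

Lemma is_sup_closure1 E s : closure E = closure [set s] -> is_sup E s.
Proof.
move=> Es; split=> [e Ee|u ub]; first by rewrite /spec_le -Es; exact: subset_closure.
have : closure E `<=` closure [set u].
  by apply: closure_sub_closed => //; exact: closed_closure.
by rewrite Es; apply; exact: spec_le_refl.
Qed.

Lemma is_sup_le E s u : is_sup E s -> is_sup E u -> spec_le s u.
Proof. by move=> [_ lub] [ub _]; exact: lub. Qed.

Lemma is_sup_closure E s : is_sup E s -> is_sup (closure E) s.
Proof.
move=> [ub lub]; split=> [|u ubu].
  by apply: closure_sub_closed => //; exact: closed_closure.
by apply: lub => e Ee; apply: ubu; exact: subset_closure.
Qed.

Lemma irreducible_closure E : irreducible E -> irreducible (closure E).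
Proof.
move=> [[e Ee] irrE]; split; first by exists e; exact: subset_closure.
move=> A1 A2 c1 c2 EA.
have /(irrE _ _ c1 c2) [] : E `<=` A1 `|` A2 by move=> t /subset_closure /EA.
  by left; exact: closure_sub_closed.
by right; exact: closure_sub_closed.
Qed.

Lemma irreducible_bigcup (D : set X) (F : X -> set X) :
  irreducible D -> (forall y, D y -> closure (F y) = closure [set y]) ->
  irreducible (\bigcup_(y in D) F y).
Proof.
move=> [[y Dy] irrD] Fy; split.
  have /(_ setT filterT) [w [Fyw _]] : closure (F y) y.
    by rewrite Fy //; exact: spec_le_refl.
  by exists w, y.
move=> A1 A2 c1 c2 UA; have cA := closedU c1 c2.
have DA : D `<=` A1 `|` A2.
  move=> t Dt; have : closure (F t) t by rewrite Fy //; exact: spec_le_refl.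
  by apply: (@closure_sub_closed _ (F t) cA) => w Fw; apply: UA; exists t.
have sub_Ai A : closed A -> D `<=` A -> \bigcup_(y in D) F y `<=` A.
  move=> cAi DAi w [t Dt Ftw].
  have : closure [set t] w by rewrite -Fy //; exact: subset_closure.
  by apply: closure_sub_closed => // _ ->; exact: DAi.
by case: (irrD _ _ c1 c2 DA) => ?; [left|right]; exact: sub_Ai.
Qed.

Lemma is_sup_bigcup (D : set X) (F : X -> set X) x :
  is_sup D x -> (forall y, D y -> closure (F y) = closure [set y]) ->
  is_sup (\bigcup_(y in D) F y) x.
Proof.
move=> [ubD lubD] Fy; split=> [w [y Dy Fyw]|u ub].
  apply: spec_le_trans (ubD _ Dy); have /is_sup_closure1[+ _] := Fy _ Dy; exact.
apply: lubD => y Dy; have /is_sup_closure1[_ +] := Fy _ Dy; apply.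
by move=> w Fyw; apply: ub; exists y.
Qed.

Lemma k_bounded_sober_closure1 E s : k_bounded_sober X ->
  irreducible E -> is_sup E s -> closure E = closure [set s].
Proof.
move=> ks irrE Es; have cEs := is_sup_closure Es.
have [c [Ec _]] := ks _ (@closed_closure _ E)
  (conj (irreducible_closure irrE) (ex_intro _ s cEs)).
have cEc := is_sup_closure1 Ec.
by rewrite Ec; apply/seteqP; split; apply: spec_le_closure;
  [exact: is_sup_le cEc Es | exact: is_sup_le Es cEc].
Qed.

Lemma closure_wayb_Irr x : Irr_continuous X -> k_bounded_sober X ->
  closure (wayb_Irr x) = closure [set x].
Proof. by move=> ic ks; have [irr sup] := ic x; exact: k_bounded_sober_closure1. Qed.

End SpecialisationOrder.

Theorem theorem3p5 (X : topologicalType) :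
  kolmogorov_space X -> Irr_continuous X -> k_bounded_sober X ->
  forall z x : X, way_below_Irr z x ->
    exists y : X, way_below_Irr z y /\ way_below_Irr y x.
Proof.
move=> _ ic ks z x zx.
pose E := \bigcup_(y in wayb_Irr x) wayb_Irr y.
have [irrx supx] := ic x.
have closure_wb y : wayb_Irr x y -> closure (wayb_Irr y) = closure [set y].
  by move=> _; exact: closure_wayb_Irr.
have supE : is_sup E x by exact: is_sup_bigcup.
have EP : IrrPlus E by split; [exact: irreducible_bigcup | exists x].
have [w [[y yx wy] zw]] := zx E EP x supE (@spec_le_refl X x).
by exists y; split => //; exact: le_way_below_Irr zw wy.
Qed.
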